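(* Let $(N_0,c,w,P)$ be an RS-situation. Then there exist prices $w_i^*\in[c,p_i(q_i^c)]$, $i\in N$, such that for every $i\in N$ \[\Pi_i^{ret}(q_i^c;w_i^* )\ \ge\ \max_{S\subseteq N:\, i\in S}\Pi_i^{ret}(q_i^S;w(q_S^S)).\]
   Context: Let $c\in\mathbb{R}$. An RS-problem is a triple $(c,w,p)$ where $w:\mathbb{R}_+\to(c,+\infty)$ is decreasing (non-increasing) and continuous, and $p:\mathbb{R}_+\to\mathbb{R}$ is decreasing (non-increasing) and continuous, satisfies $p(0)>w(0)$, and there exists $q>0$ with $p(q)=c$. An RS-situation is a tuple $(N_0,c,w,P)$ where $N=\{1,\dots,n\}$ is the set of retailers, $0$ denotes the supplier, $N_0=N\cup\{0\}$, $P=(p_1,\dots,p_n)$, and $(c,w,p_i)$ is an RS-problem for each $i\in N$. For $q\ge0$ and $\omega\in\mathbb{R}$, $\Pi_i^{ret}(q;\omega)=(p_i(q)-\omega)q$. For nonempty $S\subseteq N$, $(q_i^S)_{i\in S}$ is a fixed optimal solution of: maximize $\sum_{i\in S}(p_i(q_i)-w(q_S))q_i$ over $q\in\mathbb{R}_+^{S}$ subject to $p_i(q_i)\ge w(q_S)$ for all $i\in S$, where $q_S=\sum_{i\in S}q_i$; $q_S^S=\sum_{i\in S}q_i^S$. For $i\in N$, $q_i^c$ is a fixed optimal solution of: maximize $(p_i(q)-c)q$ over $q\ge0$ subject to $p_i(q)\ge c$. *)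

From HB Require Import structures.
From mathcomp Require Import all_boot all_order all_algebra.
From mathcomp Require Import all_classical all_reals all_analysis.
Set Implicit Arguments. Unset Strict Implicit. Unset Printing Implicit Defensive.
Import Order.TTheory GRing.Theory Num.Theory.
Import numFieldNormedType.Exports.
Local Open Scope classical_set_scope.
Local Open Scope ring_scope.

Section RS.
Variable R : realType.

Definition Rplus : set R := [set x : R | 0 <= x].

Definition nonincr_on_Rplus (f : R -> R) : Prop :=
  forall x y : R, 0 <= x -> x <= y -> f y <= f x.

Definition wholesale_ok (c : R) (w : R -> R) : Prop :=
  [/\ forall q : R, 0 <= q -> c < w q,
      nonincr_on_Rplus w &
      {within Rplus, continuous w}].

Definition RS_problem (c : R) (w p : R -> R) : Prop :=
  [/\ wholesale_ok c w,
      nonincr_on_Rplus p,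
      {within Rplus, continuous p},
      w 0 < p 0 &
      exists q : R, 0 < q /\ p q = c].

Definition RS_situation (n : nat) (c : R) (w : R -> R) (P : 'I_n -> R -> R) : Prop :=
  forall i : 'I_n, RS_problem c w (P i).

Definition Pi_ret (p : R -> R) (q omega : R) : R := (p q - omega) * q.

Definition qtot (n : nat) (S : {set 'I_n}) (q : 'I_n -> R) : R :=
  \sum_(i in S) q i.

Definition coal_feasible (n : nat) (w : R -> R) (P : 'I_n -> R -> R)
    (S : {set 'I_n}) (q : 'I_n -> R) : Prop :=
  forall i : 'I_n, i \in S -> 0 <= q i /\ w (qtot S q) <= P i (q i).

Definition coal_obj (n : nat) (w : R -> R) (P : 'I_n -> R -> R)
    (S : {set 'I_n}) (q : 'I_n -> R) : R :=
  \sum_(i in S) (P i (q i) - w (qtot S q)) * q i.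

Definition coal_opt (n : nat) (w : R -> R) (P : 'I_n -> R -> R)
    (S : {set 'I_n}) (q : 'I_n -> R) : Prop :=
  coal_feasible w P S q /\
  forall q' : 'I_n -> R, coal_feasible w P S q' ->
    coal_obj w P S q' <= coal_obj w P S q.

Definition indiv_opt (c : R) (p : R -> R) (q : R) : Prop :=
  (0 <= q /\ c <= p q) /\
  forall q' : R, 0 <= q' -> c <= p q' -> (p q' - c) * q' <= (p q - c) * q.

End RS.

From HB Require Import structures.
From mathcomp Require Import all_boot all_order all_algebra.
From mathcomp Require Import all_classical all_reals all_analysis.
Import Order.TTheory GRing.Theory Num.Theory.
Set Implicit Arguments. Unset Strict Implicit.
Local Open Scope ring_scope.

(* The prices w_i^* = c work.  In any coalition S the wholesale price w(q_S^S)
   exceeds c, so retailer i's profit at q_i^S is at most its profit at the same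
   quantity and price c; and q_i^S is feasible for the individual problem
   (p_i(q_i^S) >= w(q_S^S) > c), whose optimum q_i^c therefore does better. *)

Section RetailerProfit.
Variable R : realType.

Lemma Pi_ret_le_price (p : R -> R) (q omega1 omega2 : R) :
  0 <= q -> omega1 <= omega2 -> Pi_ret p q omega2 <= Pi_ret p q omega1.
Proof. by move=> q0 le12; rewrite /Pi_ret ler_wpM2r // lerB. Qed.

Lemma indiv_opt_Pi_ret_max (c : R) (p : R -> R) (qc q : R) :
  indiv_opt c p qc -> 0 <= q -> c <= p q -> Pi_ret p q c <= Pi_ret p qc c.
Proof. by move=> [_ qc_max]; exact: qc_max. Qed.

Lemma qtot_ge0 (n : nat) (w : R -> R) (P : 'I_n -> R -> R)
    (S : {set 'I_n}) (q : 'I_n -> R) :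
  coal_feasible w P S q -> 0 <= qtot S q.
Proof. by move=> feas; apply: sumr_ge0 => j jS; exact: (feas j jS).1. Qed.

Lemma coal_profit_le_monopoly_profit (n : nat) (c : R) (w : R -> R)
    (P : 'I_n -> R -> R) (S : {set 'I_n}) (q : 'I_n -> R) (qc : R) (i : 'I_n) :
  wholesale_ok c w -> coal_feasible w P S q -> indiv_opt c (P i) qc ->
  i \in S -> Pi_ret (P i) (q i) (w (qtot S q)) <= Pi_ret (P i) qc c.
Proof.
move=> [w_gt_c _ _] feas opt_qc iS.
have [qi0 w_le_pi] := feas i iS.
have c_lt_w : c < w (qtot S q) by apply: w_gt_c; exact: qtot_ge0 feas.
apply: le_trans (Pi_ret_le_price (P i) qi0 (ltW c_lt_w)) _.
apply: indiv_opt_Pi_ret_max opt_qc qi0 _.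
exact: le_trans (ltW c_lt_w) w_le_pi.
Qed.

End RetailerProfit.

Theorem lemma5p4 (R : realType) (n : nat) (c : R) (w : R -> R)
    (P : 'I_n -> R -> R)
    (qS : {set 'I_n} -> 'I_n -> R) (qc : 'I_n -> R) :
  RS_situation c w P ->
  (forall S : {set 'I_n}, S != finset.set0 -> coal_opt w P S (qS S)) ->
  (forall i : 'I_n, indiv_opt c (P i) (qc i)) ->
  exists ws : 'I_n -> R,
    forall i : 'I_n,
      (c <= ws i /\ ws i <= P i (qc i)) /\
      forall S : {set 'I_n}, i \in S ->
        Pi_ret (P i) (qS S i) (w (qtot S (qS S))) <= Pi_ret (P i) (qc i) (ws i).
Proof.
move=> situation qS_opt qc_opt; exists (fun _ => c) => i.
split; first by have [[_ c_le_pqc] _] := qc_opt i.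
move=> S iS.
have S_neq0 : S != finset.set0 by apply/set0Pn; exists i.
have [[w_ok _ _ _ _] [feas _]] := (situation i, qS_opt S S_neq0).
exact: coal_profit_le_monopoly_profit w_ok feas (qc_opt i) iS.
Qed.
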